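(* Let $K$ be a finite extension of $\mathbb Q$, $\mathcal O$ its ring of integers, $B\subset\mathcal O$ an order, $S\subset B$ a multiplicatively closed subset and $A=B_S$. Let $\mu:A^2\to U(k)$ be a finite-dimensional unitary representation of the additive group $A^2$ whose character is $SL(2,A)$-invariant, i.e. $\mathrm{tr}\,\mu(g.t)=\mathrm{tr}\,\mu(t)$ for all $g\in SL(2,A)$, $t\in A^2$ (with $SL(2,A)$ acting on $A^2$ by matrix multiplication). Then there exists a nonzero $q\in\mathbb N$ such that $\mu$ is trivial on $(qA)^2$, i.e. $\mu$ factors through $(A/qA)^2$. *)

From HB Require Import structures.
From mathcomp Require Import all_boot all_order all_algebra all_field.
Set Implicit Arguments. Unset Strict Implicit. Unset Printing Implicit Defensive.
Import Order.TTheory GRing.Theory Num.Theory.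
Local Open Scope ring_scope.

(* K is a number field: a finite-dimensional field extension L of rat. *)

Definition integral_elt (L : fieldExtType rat) (x : L) : Prop :=
  exists p : {poly int}, p \is monic /\ root (map_poly (fun z : int => z%:~R : L) p) x.

Definition is_subring (L : fieldExtType rat) (B : pred L) : Prop :=
  1 \in B /\ (forall x y, x \in B -> y \in B -> x - y \in B) /\
  (forall x y, x \in B -> y \in B -> x * y \in B).

(* B is an order of L: a subring of the ring of integers O_L whose
   Q-span is all of L (equivalently, a full-rank subring of O_L). *)
Definition is_order (L : fieldExtType rat) (B : pred L) : Prop :=
  is_subring B /\ (forall x, x \in B -> integral_elt x) /\
  (forall x : L, exists n : nat, (0 < n)%N /\ (n%:R * x) \in B).

Definition mult_closed_in (L : fieldExtType rat) (B S : pred L) : Prop :=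
  (forall s, s \in S -> s \in B) /\ 1 \in S /\
  (forall s t, s \in S -> t \in S -> s * t \in S).

Definition localization (L : fieldExtType rat) (B S : pred L) (x : L) : Prop :=
  exists b s, [/\ b \in B, s \in S & x = b / s].

Definition adjmx (C : numClosedFieldType) (k : nat) (M : 'M[C]_k) : 'M[C]_k :=
  (map_mx Num.conj M)^T.

From HB Require Import structures.
From mathcomp Require Import all_boot all_order all_algebra all_field.
From mathcomp Require Import ring zify.
From Stdlib Require Import Classical.
Import Order.TTheory GRing.Theory Num.Theory.

Set Implicit Arguments.
Unset Strict Implicit.
Unset Printing Implicit Defensive.

Local Open Scope ring_scope.

(* Simultaneously diagonalize the commuting unitary matrices mu(t).  The
   diagonal entries d_1, ..., d_k are characters of A^2 whose sum is the trace,
   so by Dedekind's independence of characters every g in SL(2, A) permutes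
   the multiset {d_i}.  For the shears u_b = [[1, b], [0, 1]], the k + 1
   characters d_i o u_(jt), 0 <= j <= k, cannot all be distinct, and comparing
   two of them gives d_i(mt, 0) = 1 for some 0 < m <= k, hence
   d_i(k! t, 0) = 1; the rotation [[0, -1], [1, 0]] transfers this to the
   second coordinate.  So q = k! works, and of the arithmetic hypotheses only
   the fact that A is a ring is used. *)

Lemma exists_pred_iff (T : finType) (P : T -> Prop) :
  exists Q : pred T, forall x, P x <-> Q x.
Proof.
apply: (@fin_all_exists T (fun=> bool) (fun x b => P x <-> b)) => x.
by case: (classic (P x)) => Px; [exists true | exists false]; split.
Qed.

Section Characters.

Variables (G : zmodType) (D : G -> Prop) (C : numClosedFieldType).
Hypothesis D0 : D 0.
Hypothesis DD : forall a b, D a -> D b -> D (a + b).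

Definition character_on (chi : G -> C) :=
  chi 0 = 1 /\ forall a b, D a -> D b -> chi (a + b) = chi a * chi b.

Lemma character_natmul chi a n :
  character_on chi -> D a -> chi (a *+ n) = chi a ^+ n.
Proof.
move=> [chi0 chiD] Da; elim: n => [|n IHn]; first by rewrite mulr0n chi0.
have Dan : D (a *+ n) by elim: (n) => [|m Dam]; rewrite ?mulrS; auto.
by rewrite mulrS chiD // IHn exprS.
Qed.

Lemma character_neq0 chi a : character_on chi -> D a -> D (- a) -> chi a != 0.
Proof.
move=> [chi0 chiD] Da Dna; apply/eqP => chia0.
by move: (chiD _ _ Da Dna); rewrite subrr chi0 chia0 mul0r; apply/eqP; rewrite oner_eq0.
Qed.

Lemma character_comp chi (f : G -> G) :
  (forall a b, f (a + b) = f a + f b) -> (forall a, D a -> D (f a)) ->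
  character_on chi -> character_on (chi \o f).
Proof.
move=> fD Df [chi0 chiD]; split=> [|a b Da Db] /=; last by rewrite fD chiD; auto.
have f0 : f 0 = 0 by apply: (@addrI _ (f 0)); rewrite -fD !addr0.
by rewrite f0.
Qed.

(* Dedekind's independence of characters, in a form that needs no decidable
   equality between characters. *)
Lemma character_class_coef_sum0 n (chi : 'I_n -> G -> C) (c : 'I_n -> C)
    (psi : G -> C) (Q : pred 'I_n) :
  (forall i, character_on (chi i)) ->
  (forall i, (forall a, D a -> chi i a = psi a) <-> Q i) ->
  (forall a, D a -> \sum_i c i * chi i a = 0) ->
  \sum_(i | Q i) c i = 0.
Proof.
elim: n chi c Q => [|n IHn] chi c Q chiP QP rel; first by rewrite big_ord0.
have [allQ|] := boolP [forall i, Q i].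
  rewrite (eq_bigl xpredT) => [|i]; last exact: (forallP allQ).
  by rewrite -[RHS](rel 0 D0); apply: eq_bigr => i _; rewrite (chiP i).1 mulr1.
case/forallPn => m /negP nQm.
have nPm : ~ forall a, D a -> chi m a = psi a by move/QP.
have [b nPmb] := not_all_ex_not _ _ nPm.
have [Db chimb] := imply_to_and _ _ nPmb.
(* Subtracting chi m b times the relation from its translate by b kills the
   coefficient of chi m and scales the class of psi by psi b - chi m b != 0. *)
have rel_m a : D a ->
    \sum_j (c (lift m j) * (chi (lift m j) b - chi m b)) * chi (lift m j) a = 0.
  move=> Da; have : \sum_i c i * (chi i b - chi m b) * chi i a = 0.
    have expand i : c i * (chi i b - chi m b) * chi i a =
        c i * chi i (b + a) - chi m b * (c i * chi i a).
      by rewrite (chiP i).2 //; ring.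
    by rewrite (eq_bigr _ (fun i _ => expand i)) sumrB -mulr_sumr !rel ?mulr0 ?subrr; auto.
  by rewrite (bigD1_ord m) //= subrr mulr0 mul0r add0r.
have := IHn _ _ (fun j => Q (lift m j)) (fun j => chiP (lift m j))
  (fun j => QP (lift m j)) rel_m.
rewrite (eq_bigr (fun j => (psi b - chi m b) * c (lift m j))); last first.
  by move=> j /QP chij; rewrite chij // mulrC.
move=> /eqP; rewrite -mulr_sumr mulf_eq0 subr_eq0 => /orP[/eqP chimb' | /eqP sum0].
  by case: chimb; rewrite -chimb'.
by rewrite big_mkcond (bigD1_ord m) //= ifN ?add0r -?big_mkcond //; apply/negP.
Qed.

Lemma character_sum_eq_mem k (d f : 'I_k -> G -> C) :
  (forall i, character_on (d i)) -> (forall i, character_on (f i)) ->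
  (forall a, D a -> \sum_i d i a = \sum_i f i a) ->
  forall i0, exists j, forall a, D a -> d j a = f i0 a.
Proof.
move=> dP fP dfsum i0; apply: NNPP => nomatch.
(* Otherwise Dedekind's lemma, applied to sum d - sum f = 0, says that the
   number of j with f j = f i0 is zero. *)
pose chi i := match split i with inl j => d j | inr j => f j end.
pose c (i : 'I_(k + k)) : C := match split i with inl _ => 1 | inr _ => -1 end.
have chil j : chi (lshift k j) = d j by rewrite /chi (unsplitK (inl j)).
have chir j : chi (rshift k j) = f j by rewrite /chi (unsplitK (inr j)).
have cl j : c (lshift k j) = 1 by rewrite /c (unsplitK (inl j)).
have cr j : c (rshift k j) = -1 by rewrite /c (unsplitK (inr j)).
have chiP i : character_on (chi i) by rewrite /chi; case: split.
have rel a : D a -> \sum_i c i * chi i a = 0.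
  move=> Da; rewrite big_split_ord /=.
  under eq_bigr do rewrite cl chil mul1r.
  under [X in _ + X]eq_bigr do rewrite cr chir mulN1r.
  by rewrite sumrN dfsum // subrr.
have [Q QP] := exists_pred_iff (fun i => forall a, D a -> chi i a = f i0 a).
have := character_class_coef_sum0 chiP QP rel.
rewrite big_split_ord /= big_pred0 => [|j]; last first.
  by apply/negbTE/negP => /QP; rewrite chil => dj; apply: nomatch; exists j.
under eq_bigr do rewrite cr.
rewrite add0r sumrN sumr_const => /eqP; rewrite oppr_eq0 pnatr_eq0 -leqn0.
apply/negP; rewrite -ltnNge; apply/card_gt0P.
by exists i0; rewrite unfold_in; apply/QP; rewrite chir.
Qed.

End Characters.

Definition subring_prop (R : comPzRingType) (A : R -> Prop) :=
  [/\ A 1, forall x y, A x -> A y -> A (x - y) & forall x y, A x -> A y -> A (x * y)].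

Definition pair_in (R : Type) (A : R -> Prop) (p : R * R) := A p.1 /\ A p.2.

(* The actions of [[1, b], [0, 1]] and [[0, -1], [1, 0]] on column vectors. *)
Definition shear (R : comPzRingType) (b : R) (p : R * R) := (p.1 + b * p.2, p.2).
Definition rot {R : comPzRingType} (p : R * R) := (- p.2, p.1).

Lemma shearD (R : comPzRingType) (b : R) p q : shear b (p + q) = shear b p + shear b q.
Proof. by congr (_, _); rewrite /= mulrDr addrACA. Qed.

Lemma rotD (R : comPzRingType) (p q : R * R) : rot (p + q) = rot p + rot q.
Proof. by congr (_, _); rewrite /= opprD. Qed.

Lemma pair_mulrn (R : comPzRingType) (x : R) n : (x, 0) *+ n = (x *+ n, 0 : R).
Proof. by elim: n => [|n IHn] //; rewrite !mulrS IHn; congr (_, _); rewrite addr0. Qed.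

Section Shears.

Variables (R : comPzRingType) (A : R -> Prop) (C : numClosedFieldType).
Hypothesis subA : subring_prop A.

Lemma subring_prop1 : A 1. Proof. by case: subA. Qed.

Lemma subring_propM x y : A x -> A y -> A (x * y). Proof. by case: subA; auto. Qed.

Lemma subring_prop0 : A 0.
Proof. by case: subA => A1 AB _; rewrite -(subrr 1); apply: AB. Qed.

Lemma subring_propN x : A x -> A (- x).
Proof. by case: subA => _ AB _ Ax; rewrite -sub0r; apply: AB => //; apply: subring_prop0. Qed.

Lemma subring_propD x y : A x -> A y -> A (x + y).
Proof.
by case: subA => _ AB _ Ax Ay; rewrite -[y]opprK; apply: AB => //; apply: subring_propN.
Qed.

Lemma subring_prop_nat n : A n%:R.
Proof.
elim: n => [|n IHn]; first exact: subring_prop0.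
by rewrite mulrS; apply: subring_propD => //; apply: subring_prop1.
Qed.

Lemma pair_in0 : pair_in A 0.
Proof. by split; apply: subring_prop0. Qed.

Lemma pair_inD p q : pair_in A p -> pair_in A q -> pair_in A (p + q).
Proof. by move=> [Ap1 Ap2] [Aq1 Aq2]; split; apply: subring_propD. Qed.

Lemma pair_in_shear b p : A b -> pair_in A p -> pair_in A (shear b p).
Proof. by move=> Ab [Ap1 Ap2]; split=> //=; apply: subring_propD => //; apply: subring_propM. Qed.

Lemma pair_in_rot p : pair_in A p -> pair_in A (rot p).
Proof. by move=> [Ap1 Ap2]; split=> //=; apply: subring_propN. Qed.

Implicit Type chi : R * R -> C.

Lemma character_shear_fixed chi b c :
  character_on (pair_in A) chi -> A b -> A c ->
  (forall p, pair_in A p -> chi (shear b p) = chi (shear c p)) ->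
  chi (c - b, 0) = 1.
Proof.
move=> chiP Ab Ac eq_bc; have [_ chiD] := chiP.
have A0 := subring_prop0; have A1 := subring_prop1.
have Acb : A (c - b) by apply: subring_propD => //; apply: subring_propN.
have chi01 : chi (0, 1) != 0.
  by apply: (character_neq0 chiP); split; rewrite /= ?oppr0 //; apply: subring_propN.
have split_cb : chi (c - b, 1) = chi (c - b, 0) * chi (0, 1).
  by rewrite -chiD; [congr chi; congr (_, _); rewrite /= ?addr0 ?add0r | split | split].
have := eq_bc (- b, 1) (conj (subring_propN Ab) A1).
rewrite /shear /= !mulr1 addNr addrC split_cb.
by move/esym/(canRL (mulfK chi01)); rewrite divff.
Qed.

Lemma character_fixed_dvd chi t m n :
  character_on (pair_in A) chi -> A t -> chi (m%:R * t, 0) = 1 -> (m %| n)%N ->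
  chi (n%:R * t, 0) = 1.
Proof.
move=> chiP At chim1 /dvdnP [r ->].
have Amt : pair_in A (m%:R * t, 0).
  by split; [apply: subring_propM => //; apply: subring_prop_nat | apply: subring_prop0].
rewrite natrM -mulrA mulr_natl -pair_mulrn.
by rewrite (character_natmul pair_in0 pair_inD) // chim1 expr1n.
Qed.

Lemma character_shear_invariant_sum_fact k (d : 'I_k -> R * R -> C) i t :
  (forall i, character_on (pair_in A) (d i)) ->
  (forall b p, A b -> pair_in A p -> \sum_i d i (shear b p) = \sum_i d i p) ->
  A t -> d i (k`!%:R * t, 0) = 1.
Proof.
move=> dP dsum At.
have Ajt (j : nat) : A (j%:R * t) by apply: subring_propM => //; apply: subring_prop_nat.
have orbit (j : 'I_k.+1) :
    exists u, forall p, pair_in A p -> d u p = d i (shear (j%:R * t) p).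
  apply: (@character_sum_eq_mem _ _ _ pair_in0 pair_inD _ d
    (fun u => d u \o shear (j%:R * t)) dP) => [u | p Dp].
    apply: character_comp; [exact: shearD | | exact: dP].
    by move=> p; apply: pair_in_shear.
  by rewrite [RHS](dsum _ _ (Ajt j) Dp).
(* k + 1 shifted characters among the k characters d: two of them coincide. *)
have [sigma sigmaP] := fin_all_exists orbit.
have /injectivePn [x [y neq_xy sigma_xy]] : ~~ injectiveb sigma.
  by apply/negP => /injectiveP /leq_card; rewrite !card_ord ltnn.
wlog lt_xy : x y neq_xy sigma_xy / (x < y)%N.
  move=> gen; case: (ltngtP x y) => [lt_xy | lt_yx | /val_inj eq_xy]; first exact: (gen x y).
    by apply: (gen y x) => //; rewrite eq_sym.
  by rewrite eq_xy eqxx in neq_xy.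
have := character_shear_fixed (dP i) (Ajt x) (Ajt y).
rewrite -mulrBl -natrB ?(ltnW lt_xy) // => /(_ _)/character_fixed_dvd -> //.
- by move=> p Dp; rewrite -!sigmaP // sigma_xy.
- apply: dvdn_fact; rewrite subn_gt0 lt_xy /=.
  by rewrite (leq_trans (leq_subr _ _)) // -ltnS.
Qed.

Lemma characters_trivial_on_fact k (d : 'I_k -> R * R -> C) i x y :
  (forall i, character_on (pair_in A) (d i)) ->
  (forall b p, A b -> pair_in A p -> \sum_i d i (shear b p) = \sum_i d i p) ->
  (forall p, pair_in A p -> \sum_i d i (rot p) = \sum_i d i p) ->
  A x -> A y -> d i (k`!%:R * x, k`!%:R * y) = 1.
Proof.
move=> dP dsum_shear dsum_rot Ax Ay.
have Aq z : A z -> A (k`!%:R * z) by move=> Az; apply: subring_propM => //; apply: subring_prop_nat.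
have [j dj] : exists j, forall p, pair_in A p -> d j p = d i (rot p).
  apply: (@character_sum_eq_mem _ _ _ pair_in0 pair_inD _ d (fun u => d u \o rot) dP).
    by move=> u; apply: character_comp; [exact: rotD | exact: pair_in_rot | exact: dP].
  by move=> p Dp; rewrite [RHS](dsum_rot _ Dp).
have [_ diD] := dP i; have A0 := subring_prop0.
have -> : (k`!%:R * x, k`!%:R * y) = (k`!%:R * x, 0) + rot (k`!%:R * y, 0).
  by congr (_, _); rewrite /= ?oppr0 ?addr0 ?add0r.
rewrite diD; last 2 first.
- by split; [apply: Aq | ].
- by apply: pair_in_rot; split; [apply: Aq | ].
rewrite -dj; last by split; [apply: Aq | ].
by rewrite !(character_shear_invariant_sum_fact _ dP dsum_shear) ?mulr1.
Qed.

End Shears.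

Lemma unitary_similar_diag (C : numClosedFieldType) k (M : 'M[C]_k) :
  M *m adjmx M = 1%:M -> exists2 P : 'M_k, P \in unitmx & similar_diag P M.
Proof.
move=> unitM.
have /orthomx_spectralP spectralM : M \is normalmx.
  by rewrite qualifE -map_trmx unitM (mulmx1C unitM).
exists (spectralmx M); first exact: spectral_unit.
rewrite /similar_to conjumx ?spectral_unit // {2}spectralM !mulmxA.
by rewrite mulmxV ?spectral_unit // mul1mx -mulmxA mulmxV ?spectral_unit // mulmx1 diag_mx_is_diag.
Qed.

Lemma similar_diag_span (F : fieldType) n (P : 'M[F]_n) (X : seq 'M[F]_n) f :
  all [pred A | similar_diag P A] X -> f \in <<X>>%VS -> similar_diag P f.
Proof.
move=> XP /(@coord_span _ _ _ (in_tuple X)) ->; apply/is_diag_mxP => i j neq_ij.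
rewrite /conjmx mulmx_sumr mulmx_suml summxE big1 // => l _.
rewrite -scalemxAr -scalemxAl mxE.
by move/allP/(_ _ (mem_nth 0 (ltn_ord l)))/is_diag_mxP: XP => ->; rewrite ?mulr0.
Qed.

Lemma dim_span_cons (K : fieldType) (vT : vectType K) (X : seq vT) v :
  v \notin <<X>>%VS -> (\dim <<X>>%VS < \dim <<v :: X>>%VS)%N.
Proof.
move=> vX; rewrite ltnNge; apply: contra vX => le_dim.
have /eqP -> : (<<X>> == <<v :: X>>)%VS by rewrite eqEdim le_dim andbT span_cons addvSr.
by apply: memv_span; rewrite mem_head.
Qed.

Lemma exists_spanning_subfamily (K : fieldType) (vT : vectType K) (T : Type)
    (D : T -> Prop) (M : T -> vT) :
  exists2 X : seq vT, {in X, forall v, exists2 t, D t & v = M t} &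
    forall t, D t -> M t \in <<X>>%VS.
Proof.
suff grow n (X : seq vT) : (\dim {:vT} - \dim <<X>>%VS <= n)%N ->
    {in X, forall v, exists2 t, D t & v = M t} ->
    exists2 X : seq vT, {in X, forall v, exists2 t, D t & v = M t} &
      forall t, D t -> M t \in <<X>>%VS.
  exact: (grow _ [::] (leqnn _)).
have span_or_miss Y :
    (forall t, D t -> M t \in <<Y>>%VS) \/ exists2 t, D t & M t \notin <<Y>>%VS.
  case: (classic (exists2 t, D t & M t \notin <<Y>>%VS)) => [|none]; first by right.
  by left=> t Dt; apply: contraT => MtX; case: none; exists t.
elim: n X => [|n IHn] X codimX XD.
all: have [Xspans | [t Dt MtX]] := span_or_miss X; first by exists X.
all: have := dim_span_cons MtX; have := dimvS (subvf <<M t :: X>>%VS).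
- by move: codimX; lia.
- move=> le_dim lt_dim; apply: (IHn (M t :: X)); first by move: codimX; lia.
  by move=> v; rewrite in_cons => /predU1P [-> | /XD]; [exists t |].
Qed.

Lemma commuting_unitary_codiagonalizable (C : numClosedFieldType) k (T : Type)
    (D : T -> Prop) (M : T -> 'M[C]_k) :
  (forall t, D t -> M t *m adjmx (M t) = 1%:M) ->
  (forall s t, D s -> D t -> M s *m M t = M t *m M s) ->
  exists2 P : 'M[C]_k, P \in unitmx & forall t, D t -> similar_diag P (M t).
Proof.
move=> unitM commM; have [X XD spanX] := exists_spanning_subfamily D M.
have [|P Punit XP] := (codiagonalizableP X).1.
  split=> [f g /XD [s Ds ->] /XD [t Dt ->] | f /XD [t Dt ->]]; first exact: commM.
  exact: unitary_similar_diag (unitM t Dt).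
by exists P => // t /spanX; apply: similar_diag_span.
Qed.

Lemma diag_mulmx_entry (R : pzSemiRingType) n (X Y : 'M[R]_n) i :
  is_diag_mx X -> (X *m Y) i i = X i i * Y i i.
Proof.
move=> /is_diag_mxP Xdiag; rewrite mxE (bigD1 i) //= big1 ?addr0 // => j neq_ji.
by rewrite Xdiag ?mul0r // eq_sym.
Qed.

Lemma mxtrace_conjmx (F : fieldType) n (P M : 'M[F]_n) :
  P \in unitmx -> \tr (conjmx P M) = \tr M.
Proof. by move=> Punit; rewrite conjumx // mxtrace_mulC mulmxA mulVmx // mul1mx. Qed.

Section CodiagonalRepresentation.

Variables (G : zmodType) (D : G -> Prop) (C : numClosedFieldType) (k : nat).
Variable rho : G -> 'M[C]_k.
Hypothesis D0 : D 0.
Hypothesis rhoD : forall p q, D p -> D q -> rho (p + q) = rho p *m rho q.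

Lemma unitary_morph0 : rho 0 *m adjmx (rho 0) = 1%:M -> rho 0 = 1%:M.
Proof. by move=> unit0; rewrite -[LHS]mulmx1 -unit0 mulmxA -rhoD // addr0. Qed.

Lemma conjmx_diag_character (P : 'M[C]_k) i :
  P \in unitmx -> rho 0 = 1%:M -> (forall p, D p -> similar_diag P (rho p)) ->
  character_on D (fun p => conjmx P (rho p) i i).
Proof.
move=> Punit rho0 Pdiag; split=> [|p q Dp Dq].
  by rewrite rho0 conjmx_scalar ?row_free_unit // mxE eqxx.
by rewrite rhoD // conjmxM ?inE ?stablemx_unit // diag_mulmx_entry //; apply: Pdiag.
Qed.

End CodiagonalRepresentation.

Theorem unitary_rep_trivial_on_fact (R : comPzRingType) (A : R -> Prop)
    (C : numClosedFieldType) k (rho : R * R -> 'M[C]_k) :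
  subring_prop A ->
  (forall p q, pair_in A p -> pair_in A q -> rho (p + q) = rho p *m rho q) ->
  (forall p, pair_in A p -> rho p *m adjmx (rho p) = 1%:M) ->
  (forall b p, A b -> pair_in A p -> \tr (rho (shear b p)) = \tr (rho p)) ->
  (forall p, pair_in A p -> \tr (rho (rot p)) = \tr (rho p)) ->
  forall x y, A x -> A y -> rho (k`!%:R * x, k`!%:R * y) = 1%:M.
Proof.
move=> subA rhoD unit_rho tr_shear tr_rot x y Ax Ay.
have D0 := pair_in0 subA.
have commute p q : pair_in A p -> pair_in A q -> rho p *m rho q = rho q *m rho p.
  by move=> Dp Dq; rewrite -!rhoD // addrC.
have [P Punit Pdiag] := commuting_unitary_codiagonalizable unit_rho commute.
pose d i p := conjmx P (rho p) i i.
have rho0 : rho 0 = 1%:M := unitary_morph0 D0 rhoD (unit_rho 0 D0).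
have dP i : character_on (pair_in A) (d i).
  by rewrite /d; apply: conjmx_diag_character.
have tr_d p : \tr (rho p) = \sum_i d i p by rewrite -(mxtrace_conjmx _ Punit).
have sum_shear b p : A b -> pair_in A p -> \sum_i d i (shear b p) = \sum_i d i p.
  by move=> Ab Dp; rewrite -!tr_d tr_shear.
have sum_rot p : pair_in A p -> \sum_i d i (rot p) = \sum_i d i p.
  by move=> Dp; rewrite -!tr_d tr_rot.
have d_fact i := characters_trivial_on_fact subA i dP sum_shear sum_rot Ax Ay.
have Dq : pair_in A (k`!%:R * x, k`!%:R * y).
  by split; apply: subring_propM => //; apply: subring_prop_nat.
have rho_q_diag : conjmx P (rho (k`!%:R * x, k`!%:R * y)) = 1%:M.
  apply/matrixP => i j; rewrite [RHS]mxE; case: eqVneq => [<- | neq_ij].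
    exact: d_fact.
  by move: (Pdiag _ Dq) => /is_diag_mxP ->.
by rewrite -[LHS](conjmxK _ Punit) rho_q_diag conjmx_scalar ?row_free_unit ?unitmx_inv.
Qed.

Lemma localization_subring (L : fieldExtType rat) (B S : pred L) :
  is_subring B -> mult_closed_in B S -> 0 \notin S -> subring_prop (localization B S).
Proof.
move=> [B1 [BB BM]] [SB [S1 SM]] S0.
have Sneq0 s : s \in S -> s != 0 by apply: contraTneq => ->.
split; first by exists 1, 1; rewrite divr1.
- move=> _ _ [b [s [Bb Ss ->]]] [c [u [Bc Su ->]]].
  exists (b * u - c * s), (s * u); split; [by apply: BB; apply: BM => //; apply: SB | exact: SM |].
  by field; rewrite !Sneq0.
- move=> _ _ [b [s [Bb Ss ->]]] [c [u [Bc Su ->]]].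
  by exists (b * c), (s * u); rewrite mulf_div; split; [exact: BM | exact: SM |].
Qed.

Theorem lemma4p4 (L : fieldExtType rat) (B S : pred L)
  (C : numClosedFieldType) (k : nat) (mu : L -> L -> 'M[C]_k) :
  is_order B -> mult_closed_in B S -> 0 \notin S ->
  (forall x1 y1 x2 y2, localization B S x1 -> localization B S y1 ->
     localization B S x2 -> localization B S y2 ->
     mu (x1 + x2) (y1 + y2) = mu x1 y1 *m mu x2 y2) ->
  (forall x y, localization B S x -> localization B S y ->
     mu x y *m adjmx (mu x y) = 1%:M) ->
  (forall a b c d x y,
     localization B S a -> localization B S b ->
     localization B S c -> localization B S d ->
     a * d - b * c = 1 ->
     localization B S x -> localization B S y ->
     \tr (mu (a * x + b * y) (c * x + d * y)) = \tr (mu x y)) ->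
  exists q : nat, (0 < q)%N /\
    forall x y, localization B S x -> localization B S y ->
      mu (q%:R * x) (q%:R * y) = 1%:M.
Proof.
move=> [subB _] multS S0 muD mu_unit mu_tr.
have subA := localization_subring subB multS S0.
have A0 := subring_prop0 subA; have A1 := subring_prop1 subA.
exists k`!; split; first exact: fact_gt0.
apply: (@unitary_rep_trivial_on_fact _ _ _ _ (fun p => mu p.1 p.2) subA).
- by move=> [x1 y1] [x2 y2] [Ax1 Ay1] [Ax2 Ay2]; apply: muD.
- by move=> [x y] [Ax Ay]; apply: mu_unit.
- move=> b [x y] Ab [Ax Ay] /=.
  have := mu_tr 1 b 0 1 x y A1 Ab A0 A1; rewrite mulr1 mulr0 subr0 => /(_ erefl Ax Ay).
  by rewrite !mul1r mul0r add0r.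
- move=> [x y] [Ax Ay] /=.
  have := mu_tr 0 (-1) 1 0 x y A0 (subring_propN subA A1) A1 A0.
  rewrite mulr0 mulN1r opprK add0r => /(_ erefl Ax Ay).
  by rewrite !mul0r add0r mulN1r mul1r addr0.
Qed.
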